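(* Let $l\in(0,\pi)$, $\alpha>0$, $\delta\ge0$. For $a\in[0,\pi-l]$ let $u_J$ be the solution of the Robin problem with heat source $J=\delta+\chi_{I(a,l)}$. Then $$\max_{a\in[0,\pi-l]}\operatorname{osc}(u_J)=\Theta_\alpha(l,\delta).$$ Moreover, if $\alpha>\alpha_g$, then $\operatorname{osc}(u_J)$, as a function of $a$, increases as $a$ varies from $0$ to $a_0$ and decreases as $a$ varies from $a_0$ to $\pi-l$. If $0<\alpha\le\alpha_g$, then $\operatorname{osc}(u_J)$ increases as $a$ varies from $0$ to $\pi-l$.
   Context: Robin problem: for $\alpha>0$ and $f\in L^1[-\pi,\pi]$, find $u\in C^1[-\pi,\pi]$ with $u'$ absolutely continuous on $[-\pi,\pi]$, $-u''=f$ a.e. on $(-\pi,\pi)$, and $-u'(-\pi)+\alpha u(-\pi)=u'(\pi)+\alpha u(\pi)=0$. It has a unique solution $u_f(x)=\int_{-\pi}^{\pi}G(x,y)f(y)\,dy$, where $G(x,y)=-\tfrac12 c_\alpha xy-\tfrac12|x-y|+\tfrac{1}{2c_\alpha}$ and $c_\alpha=\alpha/(1+\alpha\pi)$. $I(a,l)=[a-l,a+l]$; $\chi_E$ is the characteristic function of $E$; $\operatorname{osc}(u)=\max_{[-\pi,\pi]}u-\min_{[-\pi,\pi]}u$. $a_0=\dfrac{(1+\delta)l}{(1+\alpha\pi)(\delta+2lc_\alpha-l^2c_\alpha^2)}$. If $(1+\delta)l>\delta(\pi-l)$, let $\alpha_0$ be the unique positive root of $$(\pi^2\delta+2\pi l-l^2)\alpha^2+\frac{2(\pi\delta+l)(\pi-l)-\pi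 l(1+\delta)}{\pi-l}\,\alpha+\delta-\frac{(1+\delta)l}{\pi-l}=0,$$ and set $\alpha_g=\alpha_0$. Otherwise set $\alpha_g=0$. $\Theta_\alpha(l,\delta)=\dfrac12\,\dfrac{(1+\delta)l^2}{(\pi^2\delta+2\pi l-l^2)\alpha^2+2(\pi\delta+l)\alpha+\delta}+\pi l+\dfrac{\pi^2\delta}{2}-\dfrac{l^2}{2}$ if $\alpha>\alpha_g$. $\Theta_\alpha(l,\delta)=\dfrac12\,\dfrac{(l^2c_\alpha^2-2lc_\alpha-\delta)(\pi-l)^2}{1+\delta}+\dfrac{l(\pi-l)}{1+\alpha\pi}+\pi l+\dfrac{\pi^2\delta}{2}-\dfrac{l^2}{2}$ if $0<\alpha\le\alpha_g$. *)

From Stdlib Require Import Reals.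
From Coquelicot Require Import Coquelicot.
Open Scope R_scope.

Definition c_al (al : R) : R := al / (1 + al * PI).

(* Green's function of the Robin problem on [-pi, pi]. *)
Definition G (al x y : R) : R :=
  - (1/2) * c_al al * x * y - (1/2) * Rabs (x - y) + 1 / (2 * c_al al).

(* u_f(x) = int_{-pi}^{pi} G(x,y) f(y) dy : the unique solution of the Robin
   problem with source f (as stated in the paper's context). *)
Definition u_sol (al : R) (f : R -> R) (x : R) : R :=
  RInt (fun y => G al x y * f y) (- PI) PI.

Definition chi_I (a l : R) (y : R) : R :=
  if Rle_dec (a - l) y then (if Rle_dec y (a + l) then 1 else 0) else 0.

Definition J (delta a l : R) (y : R) : R := delta + chi_I a l y.

Definition umax (u : R -> R) : R :=
  real (Lub_Rbar (fun v => exists x, - PI <= x <= PI /\ v = u x)).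
Definition umin (u : R -> R) : R :=
  real (Glb_Rbar (fun v => exists x, - PI <= x <= PI /\ v = u x)).
Definition osc (u : R -> R) : R := umax u - umin u.

Definition a0 (al l delta : R) : R :=
  (1 + delta) * l /
  ((1 + al * PI) * (delta + 2 * l * c_al al - l ^ 2 * (c_al al) ^ 2)).

Definition qA (l delta : R) : R := PI ^ 2 * delta + 2 * PI * l - l ^ 2.
Definition qB (l delta : R) : R :=
  (2 * (PI * delta + l) * (PI - l) - PI * l * (1 + delta)) / (PI - l).
Definition qC (l delta : R) : R := delta - (1 + delta) * l / (PI - l).

(* alpha_g : the positive root of qA a^2 + qB a + qC = 0 when
   (1+delta) l > delta (pi - l) (then qA > 0 > qC, so the positive root is
   unique and given by the quadratic formula); 0 otherwise. *)
Definition alpha_g (l delta : R) : R :=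
  if Rlt_dec (delta * (PI - l)) ((1 + delta) * l)
  then (- qB l delta + sqrt (qB l delta ^ 2 - 4 * qA l delta * qC l delta))
       / (2 * qA l delta)
  else 0.

Definition Theta (al l delta : R) : R :=
  if Rlt_dec (alpha_g l delta) al then
    (1/2) * ((1 + delta) * l ^ 2 /
      ((PI ^ 2 * delta + 2 * PI * l - l ^ 2) * al ^ 2
       + 2 * (PI * delta + l) * al + delta))
    + PI * l + PI ^ 2 * delta / 2 - l ^ 2 / 2
  else
    (1/2) * ((l ^ 2 * (c_al al) ^ 2 - 2 * l * c_al al - delta) * (PI - l) ^ 2
             / (1 + delta))
    + l * (PI - l) / (1 + al * PI)
    + PI * l + PI ^ 2 * delta / 2 - l ^ 2 / 2.

Definition oscJ (al l delta a : R) : R := osc (u_sol al (J delta a l)).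

(* Integrating the Green function explicitly, u_J(x) - u_J(-pi) is piecewise
   quadratic in x: a concave parabola with slope s(a) = pi delta + l - c_alpha l a
   at x = -pi, minus the load (x - a + l)^2 / 2 on I(a,l) and 2 l (x - a) to its
   right.  It is nonnegative, so osc(u_J) is its maximum.  For
   a <= a_1 = l (1 + delta) / (c_alpha l + delta) the maximum is attained inside
   I(a,l) and is a concave quadratic in a with vertex a_0; for a > a_1 (which
   within [0, pi - l] forces delta > 0) it is attained left of I(a,l) and equals
   s(a)^2 / (2 delta), decreasing in a.  The two branches agree at a_1 > a_0, so
   the oscillation increases up to min(a_0, pi - l) and decreases afterwards.
   Finally pi - l - a_0 has the sign of the quadratic whose positive root is
   alpha_0, so a_0 < pi - l exactly when alpha > alpha_g. *)

From Stdlib Require Import Reals Lra Psatz.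
From Coquelicot Require Import Coquelicot.
Open Scope R_scope.

Lemma unimodal_max (f : R -> R) lo m hi :
  (forall a b, lo <= a -> a < b -> b <= m -> f a < f b) ->
  (forall a b, m <= a -> a < b -> b <= hi -> f b < f a) ->
  forall a, lo <= a <= hi -> f a <= f m.
Proof.
  intros Hinc Hdec a Ha.
  destruct (Rtotal_order a m) as [Hlt | [-> | Hgt]].
  - apply Rlt_le, Hinc; lra.
  - apply Rle_refl.
  - apply Rlt_le, Hdec; lra.
Qed.

Lemma quadratic_pos_iff (A B C x : R) : 0 < A -> C < 0 -> 0 < x ->
  0 < A * x ^ 2 + B * x + C <-> (- B + sqrt (B ^ 2 - 4 * A * C)) / (2 * A) < x.
Proof.
  intros HA HC Hx.
  set (s := sqrt (B ^ 2 - 4 * A * C)).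
  assert (Hs : s * s = B ^ 2 - 4 * A * C) by (apply sqrt_sqrt; nra).
  assert (Hs0 : 0 <= s) by apply sqrt_pos.
  assert (HBs : B < s /\ - B < s) by (split; nra).
  assert (Hfac : A * x ^ 2 + B * x + C = A * (x - (- B + s) / (2 * A)) * (x - (- B - s) / (2 * A))).
  { replace C with ((B * B - s * s) / (4 * A)) by (rewrite Hs; field; lra). field; lra. }
  assert (Hneg : (- B - s) / (2 * A) < 0) by (apply Rdiv_neg_pos; lra).
  rewrite Hfac. split; intro H.
  - destruct (Rle_lt_dec x ((- B + s) / (2 * A))); [|lra].
    assert (A * ((- B + s) / (2 * A) - x) * (x - (- B - s) / (2 * A)) >= 0)
      by (apply Rle_ge, Rmult_le_pos; [apply Rmult_le_pos|]; lra). nra.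
  - apply Rmult_lt_0_compat; [apply Rmult_lt_0_compat|]; lra.
Qed.

Lemma osc_eq (u : R -> R) xm xM : -PI <= xm <= PI -> -PI <= xM <= PI ->
  (forall x, -PI <= x <= PI -> u xm <= u x <= u xM) -> osc u = u xM - u xm.
Proof.
  intros Hm HM Hb. unfold osc, umax, umin.
  rewrite (is_lub_Rbar_unique _ (u xM)), (is_glb_Rbar_unique _ (u xm)); [reflexivity | |].
  - split; [intros v [x [Hx ->]]; apply Hb, Hx | intros b Hlb; apply Hlb; exists xm; auto].
  - split; [intros v [x [Hx ->]]; apply Hb, Hx | intros b Hub; apply Hub; exists xM; auto].
Qed.

Lemma is_derive_mul_Rabs (t : R) : is_derive (fun s => s * Rabs s) t (2 * Rabs t).
Proof.
  destruct (Req_dec t 0) as [-> | Ht].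
  - apply is_derive_Reals. intros e He. exists (mkposreal e He). intros h Hh0 Hh; simpl in *.
    rewrite Rplus_0_l, Rabs_R0.
    replace ((h * Rabs h - 0 * 0) / h - 2 * 0) with (Rabs h) by (field; exact Hh0).
    now rewrite Rabs_Rabsolu.
  - apply (is_derive_ext (fun s => s * Rabs s)); [reflexivity|].
    replace (2 * Rabs t) with (1 * Rabs t + t * (sign t * 1)).
    + apply (is_derive_mult (fun s => s) Rabs); [auto_derive; auto | | intros; apply Rmult_comm].
      apply (is_derive_Rabs (fun s => s)); [auto_derive; auto | exact Ht].
    + destruct (Rlt_dec t 0).
      * rewrite sign_eq_m1, Rabs_left by lra; ring.
      * rewrite sign_eq_1, Rabs_right by lra; ring.
Qed.

Definition G_prim (al x y : R) : R :=
  - c_al al * x * y ^ 2 / 4 - (y - x) * Rabs (y - x) / 4 + y / (2 * c_al al).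

Lemma is_derive_G_prim al x y : c_al al <> 0 -> is_derive (G_prim al x) y (G al x y).
Proof.
  intros Hc.
  assert (Hpoly : is_derive (fun y => - c_al al * x * y ^ 2 / 4 + y / (2 * c_al al)) y
                    (- c_al al * x * y / 2 + / (2 * c_al al)))
    by (auto_derive; [exact I | field; exact Hc]).
  assert (Hsq := is_derive_scal _ y (/ 4) _
                   (is_derive_comp (fun t => t * Rabs t) (fun y => y - x) y _ 1
                      (is_derive_mul_Rabs (y - x)) ltac:(auto_derive; auto; ring))).
  replace (G al x y) with
    (minus (- c_al al * x * y / 2 + / (2 * c_al al)) (/ 4 * scal 1 (2 * Rabs (y - x)))).
  - refine (is_derive_ext _ _ _ _ _ (is_derive_minus _ _ _ _ _ Hpoly Hsq)).
    intro t; unfold G_prim, minus, plus, opp; simpl; field; exact Hc.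
  - unfold G, minus, plus, opp, scal; simpl; unfold mult; simpl.
    rewrite Rabs_minus_sym; field; exact Hc.
Qed.

Lemma continuous_G al x y : continuous (G al x) y.
Proof.
  apply continuity_pt_filterlim. unfold G.
  assert (continuity_pt (fun y => Rabs (x - y)) y).
  { apply (continuity_pt_comp (fun y => x - y) Rabs); [reg | apply Rcontinuity_abs]. }
  reg.
Qed.

Lemma is_RInt_G_mul_const al x (f : R -> R) k u v : c_al al <> 0 -> u <= v ->
  (forall y, u < y < v -> f y = G al x y * k) ->
  is_RInt f u v (k * (G_prim al x v - G_prim al x u)).
Proof.
  intros Hc Huv Hf.
  replace (k * _) with (scal k (minus (G_prim al x v) (G_prim al x u))) by reflexivity.
  apply (is_RInt_ext (fun y => scal k (G al x y))).
  - rewrite Rmin_left, Rmax_right by exact Huv.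
    intros y Hy. rewrite Hf by exact Hy. apply Rmult_comm.
  - apply (is_RInt_scal (G al x)), (is_RInt_derive (G_prim al x)); intros y _;
      [apply is_derive_G_prim, Hc | apply continuous_G].
Qed.

Lemma u_sol_J al delta a l x : c_al al <> 0 -> -PI <= a - l -> a - l <= a + l -> a + l <= PI ->
  u_sol al (J delta a l) x =
  delta * (G_prim al x PI - G_prim al x (-PI)) + (G_prim al x (a + l) - G_prim al x (a - l)).
Proof.
  intros Hc H1 H2 H3. apply is_RInt_unique.
  replace (_ + _) with (plus (plus (delta * (G_prim al x (a - l) - G_prim al x (-PI)))
                                   ((delta + 1) * (G_prim al x (a + l) - G_prim al x (a - l))))
                             (delta * (G_prim al x PI - G_prim al x (a + l))))
    by (unfold plus; simpl; ring).
  set (f := fun y => G al x y * J delta a l y).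
  apply (is_RInt_Chasles f _ (a + l)); [apply (is_RInt_Chasles f _ (a - l)) |];
    apply is_RInt_G_mul_const; auto; intros y Hy; unfold f, J, chi_I;
    repeat destruct Rle_dec; first [reflexivity | f_equal; ring | lra].
Qed.



Lemma c_al_pos al : 0 < al -> 0 < c_al al.
Proof. intros Hal. pose proof PI_RGT_0. unfold c_al. apply Rdiv_lt_0_compat; nra. Qed.

Lemma one_sub_c_al_mul_PI al : 0 < al -> 1 - c_al al * PI = / (1 + al * PI).
Proof. intros Hal. pose proof PI_RGT_0. unfold c_al. field. nra. Qed.

Lemma c_al_PI_lt_1 al : 0 < al -> c_al al * PI < 1.
Proof.
  intros Hal. pose proof PI_RGT_0. pose proof (one_sub_c_al_mul_PI al Hal).
  assert (0 < / (1 + al * PI)) by (apply Rinv_0_lt_compat; nra). lra.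
Qed.

Ltac Rabs_by_sign :=
  repeat match goal with
  | |- context [Rabs ?t] => first [rewrite (Rabs_pos_eq t) by lra | rewrite (Rabs_left1 t) by lra]
  end.

Section RobinPeak.

Variables (al l delta : R).
Hypotheses (Hal : 0 < al) (Hl : 0 < l) (HlPI : l < PI) (Hdelta : 0 <= delta).

Local Notation c := (c_al al).

Let HPI : 0 < PI := PI_RGT_0.
Let Hc : 0 < c := c_al_pos al Hal.
Let HcPI : c * PI < 1 := c_al_PI_lt_1 al Hal.
Let Hcl : 0 < c * l < 1.
Proof. split; nra. Qed.
Let Hnum : 0 < delta + 2 * c * l - c ^ 2 * l ^ 2.
Proof. nra. Qed.

Definition uJ (a : R) : R -> R := u_sol al (J delta a l).

Definition slope (a : R) : R := PI * delta + l - c * l * a.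

Definition curv : R := (delta + 2 * c * l - c ^ 2 * l ^ 2) / (1 + delta).

Definition peak_in (a : R) : R :=
  PI * l + PI ^ 2 * delta / 2 - l ^ 2 / 2 + a * l * (1 - c * PI) - curv * a ^ 2 / 2.

Definition peak_left (a : R) : R := slope a ^ 2 / (2 * delta).

Definition a_switch : R := l * (1 + delta) / (c * l + delta).

Definition peak (a : R) : R := if Rle_dec a a_switch then peak_in a else peak_left a.

Definition argmax_in (a : R) : R := a * (1 - c * l) / (1 + delta).

Definition argmax_left (a : R) : R := slope a / delta - PI.

Lemma rise_in_square a y :
  slope a * (y + PI) - delta * (y + PI) ^ 2 / 2 - (y - a + l) ^ 2 / 2 =
  peak_in a - (1 + delta) * (y - argmax_in a) ^ 2 / 2.
Proof. unfold slope, peak_in, curv, argmax_in. field. lra. Qed.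

Lemma rise_left_square a y : 0 < delta ->
  slope a * (y + PI) - delta * (y + PI) ^ 2 / 2 =
  peak_left a - delta * (y - argmax_left a) ^ 2 / 2.
Proof. intros Hd. unfold peak_left, argmax_left. field. lra. Qed.

Lemma le_a_switch a : a <= a_switch <-> a * (c * l + delta) <= l * (1 + delta).
Proof. unfold a_switch. symmetry. apply Rle_div_r. nra. Qed.

Lemma PI_sub_l_lt_a_switch : delta = 0 -> PI - l < a_switch.
Proof.
  intros ->. unfold a_switch. apply Rlt_div_r; nra.
Qed.

Section FixedCentre.

Variable a : R.
Hypotheses (Ha0 : 0 <= a) (HaPI : a <= PI - l).

Let Hc0 : c <> 0.
Proof. lra. Qed.

Lemma uJ_rise_left x : -PI <= x <= a - l ->
  uJ a x - uJ a (-PI) = slope a * (x + PI) - delta * (x + PI) ^ 2 / 2.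
Proof.
  intros Hx. unfold uJ. rewrite !u_sol_J by lra.
  unfold G_prim, slope. Rabs_by_sign. field. exact Hc0.
Qed.

Lemma uJ_rise_in x : a - l <= x <= a + l ->
  uJ a x - uJ a (-PI) = slope a * (x + PI) - delta * (x + PI) ^ 2 / 2 - (x - a + l) ^ 2 / 2.
Proof.
  intros Hx. unfold uJ. rewrite !u_sol_J by lra.
  unfold G_prim, slope. Rabs_by_sign. field. exact Hc0.
Qed.

Lemma uJ_rise_right x : a + l <= x <= PI ->
  uJ a x - uJ a (-PI) = slope a * (x + PI) - delta * (x + PI) ^ 2 / 2 - 2 * l * (x - a).
Proof.
  intros Hx. unfold uJ. rewrite !u_sol_J by lra.
  unfold G_prim, slope. Rabs_by_sign. field. exact Hc0.
Qed.

Let Hca : c * a < 1.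
Proof. nra. Qed.

Lemma uJ_ge_left_end x : -PI <= x <= PI -> uJ a (-PI) <= uJ a x.
Proof.
  intros Hx. apply Rminus_le_0.
  assert (Hcla : 0 <= c * l * a) by (apply Rmult_le_pos; nra).
  assert (0 <= delta * (PI - x) * (x + PI)) by (apply Rmult_le_pos; nra).
  destruct (Rle_dec x (a - l)); [|destruct (Rle_dec x (a + l))].
  - rewrite uJ_rise_left by lra. unfold slope.
    assert (0 <= l * (1 - c * a) * (x + PI)) by (apply Rmult_le_pos; nra). nra.
  - rewrite uJ_rise_in by lra. unfold slope.
    assert ((x - a + l) ^ 2 / 2 <= l * (x - a + l)) by nra.
    assert (c * l * a * (x + PI) <= 2 * l * a * (c * PI)) by nra.
    nra.
  - rewrite uJ_rise_right by lra. unfold slope.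
    assert (c * l * a * (x + PI) <= 2 * l * a * (c * PI)) by nra.
    nra.
Qed.

Lemma argmax_in_mem : a <= a_switch -> a - l <= argmax_in a <= a + l.
Proof.
  rewrite le_a_switch. intros Hsw. unfold argmax_in.
  split; [apply Rle_div_r | apply Rle_div_l]; nra.
Qed.

Lemma delta_pos_of_a_switch_lt : a_switch < a -> 0 < delta.
Proof.
  intros Hsw. destruct Hdelta as [Hd | Hd0]; [exact Hd|].
  pose proof (PI_sub_l_lt_a_switch (eq_sym Hd0)). lra.
Qed.

Lemma argmax_left_mem : a_switch < a -> 0 <= argmax_left a < a - l.
Proof.
  intros Hsw. pose proof (delta_pos_of_a_switch_lt Hsw) as Hd.
  assert (Hsw' : l * (1 + delta) < a * (c * l + delta))
    by (apply Rnot_le_lt; rewrite <- le_a_switch; lra).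
  unfold argmax_left, slope.
  replace ((PI * delta + l - c * l * a) / delta - PI) with (l * (1 - c * a) / delta)
    by (field; lra).
  split; [apply Rlt_le, Rdiv_lt_0_compat | apply Rlt_div_l]; nra.
Qed.

Lemma uJ_rise_le_peak_in x : a <= a_switch -> -PI <= x <= PI -> uJ a x - uJ a (-PI) <= peak_in a.
Proof.
  intros Hsw Hx. pose proof (argmax_in_mem Hsw).
  pose proof (rise_in_square a x) as Hsq.
  pose proof (pow2_ge_0 (x - argmax_in a)).
  assert (0 <= delta * (x - argmax_in a) ^ 2) by (apply Rmult_le_pos; lra).
  destruct (Rle_dec x (a - l)); [|destruct (Rle_dec x (a + l))].
  - rewrite uJ_rise_left by lra.
    assert ((x - a + l) ^ 2 <= (x - argmax_in a) ^ 2) by nra. lra.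
  - rewrite uJ_rise_in, Hsq by lra. lra.
  - rewrite uJ_rise_right by lra.
    assert ((x - a - l) ^ 2 <= (x - argmax_in a) ^ 2) by nra. lra.
Qed.

Lemma uJ_rise_le_peak_left x : a_switch < a -> -PI <= x <= PI -> uJ a x - uJ a (-PI) <= peak_left a.
Proof.
  intros Hsw Hx. pose proof (delta_pos_of_a_switch_lt Hsw) as Hd.
  pose proof (rise_left_square a x Hd) as Hsq.
  assert (0 <= delta * (x - argmax_left a) ^ 2) by (apply Rmult_le_pos; [lra | apply pow2_ge_0]).
  destruct (Rle_dec x (a - l)); [|destruct (Rle_dec x (a + l))].
  - rewrite uJ_rise_left by lra. lra.
  - rewrite uJ_rise_in by lra. nra.
  - rewrite uJ_rise_right by lra. nra.
Qed.

Lemma uJ_rise_le_peak x : -PI <= x <= PI -> uJ a x - uJ a (-PI) <= peak a.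
Proof.
  intros Hx. unfold peak. destruct Rle_dec as [Hsw | Hsw].
  - apply uJ_rise_le_peak_in; auto.
  - apply uJ_rise_le_peak_left; [apply Rnot_le_lt |]; auto.
Qed.

Lemma uJ_rise_peak_attained : exists x, -PI <= x <= PI /\ uJ a x - uJ a (-PI) = peak a.
Proof.
  unfold peak. destruct Rle_dec as [Hsw | Hsw].
  - pose proof (argmax_in_mem Hsw). exists (argmax_in a). split; [lra|].
    rewrite uJ_rise_in, rise_in_square by lra. field.
  - apply Rnot_le_lt in Hsw.
    pose proof (argmax_left_mem Hsw). pose proof (delta_pos_of_a_switch_lt Hsw).
    exists (argmax_left a). split; [lra|].
    rewrite uJ_rise_left, rise_left_square by lra. field.
Qed.

Lemma oscJ_eq_peak : oscJ al l delta a = peak a.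
Proof.
  destruct uJ_rise_peak_attained as [xM [HxM HM]].
  unfold oscJ. fold (uJ a).
  rewrite (osc_eq (uJ a) (-PI) xM); [lra | lra | exact HxM |].
  intros x Hx. split; [apply uJ_ge_left_end, Hx|].
  pose proof (uJ_rise_le_peak x Hx). lra.
Qed.

End FixedCentre.

Lemma curv_pos : 0 < curv.
Proof. unfold curv. apply Rdiv_lt_0_compat; lra. Qed.

Lemma a0_eq : a0 al l delta = l * (1 - c * PI) / curv.
Proof.
  rewrite one_sub_c_al_mul_PI by exact Hal. unfold a0, curv.
  field. repeat split; apply Rgt_not_eq; nra.
Qed.

Lemma a0_pos : 0 < a0 al l delta.
Proof. rewrite a0_eq. apply Rdiv_lt_0_compat; [nra | apply curv_pos]. Qed.

Lemma a0_lt_a_switch : a0 al l delta < a_switch.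
Proof.
  apply Rlt_0_minus.
  assert (0 < c * l * (1 - c * l + c * PI)) by (apply Rmult_lt_0_compat; nra).
  assert (0 <= c * PI * delta) by (apply Rmult_le_pos; nra).
  replace (a_switch - a0 al l delta) with
    (l * (1 + delta) * (c * l * (1 - c * l + c * PI) + c * PI * delta)
     / ((c * l + delta) * (delta + 2 * c * l - c ^ 2 * l ^ 2))).
  - apply Rdiv_lt_0_compat; apply Rmult_lt_0_compat; nra.
  - rewrite a0_eq. unfold a_switch, curv. field. repeat split; apply Rgt_not_eq; nra.
Qed.

Lemma peak_in_sub a b :
  peak_in b - peak_in a = curv * (b - a) * (a0 al l delta - (a + b) / 2).
Proof. rewrite a0_eq. unfold peak_in. field. apply Rgt_not_eq, curv_pos. Qed.

Lemma peak_in_decr a b : a0 al l delta <= a -> a < b -> peak_in b < peak_in a.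
Proof.
  intros Ha Hab. pose proof (peak_in_sub a b). pose proof curv_pos.
  assert (0 < curv * (b - a) * ((a + b) / 2 - a0 al l delta)) by
    (apply Rmult_lt_0_compat; [apply Rmult_lt_0_compat|]; lra).
  lra.
Qed.

Lemma peak_left_a_switch : 0 < delta -> peak_left a_switch = peak_in a_switch.
Proof.
  intros Hd. unfold peak_left, peak_in, slope, a_switch, curv.
  field. repeat split; apply Rgt_not_eq; nra.
Qed.

Lemma peak_left_decr a b : 0 < delta -> a < b -> b <= PI - l -> peak_left b < peak_left a.
Proof.
  intros Hd Hab Hb. unfold peak_left, slope.
  assert (0 < PI * delta + l - c * l * b) by nra.
  assert (c * l * a < c * l * b) by nra.
  apply Rmult_lt_compat_r; [apply Rinv_0_lt_compat; lra | nra].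
Qed.

Lemma peak_eq_in a : a <= a_switch -> peak a = peak_in a.
Proof. unfold peak. destruct Rle_dec; tauto. Qed.

Lemma peak_eq_left a : a_switch < a -> peak a = peak_left a.
Proof. unfold peak. destruct Rle_dec; [lra | reflexivity]. Qed.

Lemma peak_incr a b : 0 <= a -> a < b -> b <= a0 al l delta -> peak a < peak b.
Proof.
  intros Ha Hab Hb. pose proof a0_lt_a_switch.
  rewrite !peak_eq_in by lra.
  pose proof (peak_in_sub a b). pose proof curv_pos.
  assert (0 < curv * (b - a) * (a0 al l delta - (a + b) / 2)) by
    (apply Rmult_lt_0_compat; [apply Rmult_lt_0_compat|]; lra).
  lra.
Qed.

Lemma peak_decr a b : a0 al l delta <= a -> a < b -> b <= PI - l -> peak b < peak a.
Proof.
  intros Ha Hab Hb.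
  destruct (Rle_lt_dec b a_switch) as [Hbs | Hbs].
  - rewrite !peak_eq_in by lra. apply peak_in_decr; assumption.
  - pose proof (delta_pos_of_a_switch_lt b Hb Hbs) as Hd.
    rewrite (peak_eq_left b Hbs).
    destruct (Rle_lt_dec a a_switch) as [Has | Has].
    + rewrite (peak_eq_in a Has).
      assert (peak_in a_switch <= peak_in a).
      { destruct (Rle_lt_or_eq_dec a a_switch Has) as [Hlt | ->];
          [apply Rlt_le, peak_in_decr | apply Rle_refl]; assumption. }
      pose proof (peak_left_decr a_switch b Hd Hbs Hb) as Hleft.
      rewrite peak_left_a_switch in Hleft by exact Hd. lra.
    + rewrite (peak_eq_left a Has). apply peak_left_decr; assumption.
Qed.

Lemma oscJ_incr a b : 0 <= a -> a < b -> b <= a0 al l delta -> b <= PI - l ->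
  oscJ al l delta a < oscJ al l delta b.
Proof. intros. rewrite !oscJ_eq_peak by lra. apply peak_incr; assumption. Qed.

Lemma oscJ_decr a b : a0 al l delta <= a -> a < b -> b <= PI - l ->
  oscJ al l delta b < oscJ al l delta a.
Proof.
  intros. pose proof a0_pos.
  rewrite !oscJ_eq_peak by lra. apply peak_decr; assumption.
Qed.

Lemma Theta_den_eq :
  (PI ^ 2 * delta + 2 * PI * l - l ^ 2) * al ^ 2 + 2 * (PI * delta + l) * al + delta =
  (1 + al * PI) ^ 2 * (delta + 2 * c * l - c ^ 2 * l ^ 2).
Proof. unfold c_al. field. nra. Qed.

Lemma a0_lt_iff_quadratic_pos :
  a0 al l delta < PI - l <-> 0 < qA l delta * al ^ 2 + qB l delta * al + qC l delta.
Proof.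
  set (den := (PI ^ 2 * delta + 2 * PI * l - l ^ 2) * al ^ 2 + 2 * (PI * delta + l) * al + delta).
  assert (Hden : 0 < den) by (unfold den; rewrite Theta_den_eq; apply Rmult_lt_0_compat; nra).
  set (num := (1 + delta) * l * (1 + al * PI)).
  replace (a0 al l delta) with (num / den)
    by (unfold num, den, a0; rewrite Theta_den_eq; field; repeat split; apply Rgt_not_eq; nra).
  replace (qA l delta * al ^ 2 + qB l delta * al + qC l delta) with (den - num / (PI - l))
    by (unfold num, den, qA, qB, qC; field; lra).
  rewrite Rlt_div_l, Rlt_0_minus, Rlt_div_l by lra. lra.
Qed.

Lemma quadratic_pos_iff_alpha_g_lt :
  0 < qA l delta * al ^ 2 + qB l delta * al + qC l delta <-> alpha_g l delta < al.
Proof.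
  assert (HqA : 0 < qA l delta) by (unfold qA; nra).
  unfold alpha_g. destruct Rlt_dec as [Hlt | Hge].
  - apply quadratic_pos_iff; [exact HqA | | exact Hal].
    unfold qC. apply Rlt_minus, Rlt_div_r; lra.
  - split; intros _; [exact Hal|].
    assert (HqB : 0 < qB l delta) by (unfold qB; apply Rdiv_lt_0_compat; nra).
    assert (HqC : 0 <= qC l delta).
    { unfold qC. assert ((1 + delta) * l / (PI - l) <= delta) by (apply Rle_div_l; lra). lra. }
    assert (0 < qA l delta * al ^ 2) by (apply Rmult_lt_0_compat; nra).
    nra.
Qed.

Lemma a0_lt_iff : a0 al l delta < PI - l <-> alpha_g l delta < al.
Proof. rewrite a0_lt_iff_quadratic_pos. exact quadratic_pos_iff_alpha_g_lt. Qed.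

Lemma Theta_above : alpha_g l delta < al -> Theta al l delta = oscJ al l delta (a0 al l delta).
Proof.
  intros Hg. pose proof a0_pos. pose proof a0_lt_a_switch.
  assert (a0 al l delta < PI - l) by (apply a0_lt_iff; exact Hg).
  rewrite oscJ_eq_peak, peak_eq_in by lra.
  unfold Theta. destruct Rlt_dec; [|contradiction].
  unfold peak_in. rewrite Theta_den_eq, a0_eq, one_sub_c_al_mul_PI by exact Hal. unfold curv.
  field. repeat split; apply Rgt_not_eq; nra.
Qed.

Lemma Theta_below : al <= alpha_g l delta -> Theta al l delta = oscJ al l delta (PI - l).
Proof.
  intros Hg. pose proof a0_lt_a_switch.
  assert (PI - l <= a0 al l delta) by (apply Rnot_lt_le; rewrite a0_lt_iff; lra).
  rewrite oscJ_eq_peak, peak_eq_in by lra.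
  unfold Theta. destruct Rlt_dec; [lra|].
  unfold peak_in, curv. rewrite one_sub_c_al_mul_PI by exact Hal.
  field. split; apply Rgt_not_eq; nra.
Qed.

End RobinPeak.

Theorem lemma3 (l al delta : R) :
  0 < l < PI -> 0 < al -> 0 <= delta ->
  ((forall a, 0 <= a <= PI - l -> oscJ al l delta a <= Theta al l delta) /\
   (exists a, 0 <= a <= PI - l /\ oscJ al l delta a = Theta al l delta)) /\
  (alpha_g l delta < al ->
     (forall a b, 0 <= a -> a < b -> b <= a0 al l delta -> b <= PI - l ->
        oscJ al l delta a < oscJ al l delta b) /\
     (forall a b, a0 al l delta <= a -> a < b -> b <= PI - l ->
        oscJ al l delta b < oscJ al l delta a)) /\
  (al <= alpha_g l delta ->
     forall a b, 0 <= a -> a < b -> b <= PI - l ->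
        oscJ al l delta a < oscJ al l delta b).
Proof.
  intros [Hl HlPI] Hal Hdelta.
  pose proof (oscJ_incr al l delta Hal Hl HlPI Hdelta) as Hincr.
  pose proof (oscJ_decr al l delta Hal Hl HlPI Hdelta) as Hdecr.
  pose proof (a0_pos al l delta Hal Hl HlPI Hdelta) as Ha0.
  pose proof (a0_lt_iff al l delta Hal Hl HlPI Hdelta) as Ha0_iff.
  destruct (Rlt_le_dec (alpha_g l delta) al) as [Hg | Hg].
  - assert (a0 al l delta < PI - l) by (apply Ha0_iff; exact Hg).
    rewrite (Theta_above al l delta Hal Hl HlPI Hdelta Hg).
    split; [split|split].
    + apply (unimodal_max _ 0 _ (PI - l)); intros; [apply Hincr | apply Hdecr]; lra.
    + exists (a0 al l delta). split; [lra | reflexivity].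
    + intros _. split; [exact Hincr | exact Hdecr].
    + intros; lra.
  - assert (PI - l <= a0 al l delta) by (apply Rnot_lt_le; rewrite Ha0_iff; lra).
    rewrite (Theta_below al l delta Hal Hl HlPI Hdelta Hg).
    split; [split|split].
    + apply (unimodal_max _ 0 _ (PI - l)); intros; [apply Hincr | ]; lra.
    + exists (PI - l). split; [lra | reflexivity].
    + intros; lra.
    + intros _ a b Ha Hab Hb. apply Hincr; lra.
Qed.
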